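(* Let $f$ be a regular planar discrete curve and $\mathfrak{q}\ne 0$ a space form vector with $\mathfrak{q}\perp\mathfrak{p}$, determining the space form $\mathcal{Q}$. The following are equivalent: (i) $f$ has constant arc-length in $\mathcal{Q}$; (ii) $\mathfrak{f}_i\langle\mathfrak{f}_k,\mathfrak{f}_j\rangle-\mathfrak{f}_k\langle\mathfrak{f}_i,\mathfrak{f}_j\rangle\perp\mathfrak{q}$ for all consecutive vertices $i,j,k$; (iii) the quantity $\frac{\langle\mathfrak{f}_i,\mathfrak{f}_j\rangle}{\langle\mathfrak{f}_i,\mathfrak{q}\rangle\langle\mathfrak{f}_j,\mathfrak{q}\rangle}$ is the same constant $\chi\in\mathbb{R}$ for all edges $(ij)$; (iv) there exists a circle congruence $a\in\mathcal{P}^\pm$ with $\mathfrak{a}_j\in\mathrm{span}\{\mathfrak{f}_j,\mathfrak{q},\mathfrak{p}\}$ for all $j$.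
   Context: Planar light cone model: $\mathbb{R}^{3,2}$ with form of signature $(3,2)$, light cone $\mathcal{L}$; fixed $\mathfrak{p}$ with $\langle\mathfrak{p},\mathfrak{p}\rangle=-1$; $v$ with $\langle\mathfrak{v},\mathfrak{p}\rangle=0$ are points of $\mathbb{R}^2\cup\{\infty\}$, others oriented circles/lines; incidence = orthogonality. A space form vector $\mathfrak{q}\perp\mathfrak{p}$ determines a space form $\mathcal{Q}$ of constant curvature $-\langle\mathfrak{q},\mathfrak{q}\rangle$ (Euclidean if $\langle\mathfrak{q},\mathfrak{q}\rangle=0$, hyperbolic if $>0$ with boundary given by $\mathfrak{q}\pm\sqrt{\langle\mathfrak{q},\mathfrak{q}\rangle}\mathfrak{p}$, spherical if $<0$); its isometries are compositions of M-inversions (inversions $x\mapsto x-\frac{2\langle x,\mathfrak{a}\rangle}{\langle\mathfrak{a},\mathfrak{a}\rangle}\mathfrak{a}$ with $\mathfrak{a}\perp\mathfrak{p}$) fixing $\mathfrak{q}$. A discrete curve $f$ (map from consecutive integers to points) has constant arc-length in $\mathcal{Q}$ if the $\mathcal{Q}$-distance between consecutive points is constant. It is regular if any three consecutive points are pairwise distinct, in the hyperbolic case all points lie on the same side of the boundary, and in the spherical case consecutive points are not antipodal. $\mathcal{P}^\pm_j:=\{\mathfrak{f}_{j-1},\mathfrak{f}_{j+1}\}^\perp\cap\mathcal{L}$ (circles through $f_{j-1},f_{j+1}$); a circle congruence $a\in\mathcal{P}^\pm$ chooses $a_j$ in this pencil at each vertex. *)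

From Stdlib Require Import Reals ZArith.
Open Scope R_scope.

(* R^{3,2}: vectors of R^5 with the form x0y0+x1y1+x2y2-x3y3-x4y4 (signature (3,2)). *)
Record V := mkV { v0 : R; v1 : R; v2 : R; v3 : R; v4 : R }.

Definition ip (x y : V) : R :=
  v0 x * v0 y + v1 x * v1 y + v2 x * v2 y - v3 x * v3 y - v4 x * v4 y.

Definition vzero : V := mkV 0 0 0 0 0.
Definition vadd (x y : V) : V :=
  mkV (v0 x + v0 y) (v1 x + v1 y) (v2 x + v2 y) (v3 x + v3 y) (v4 x + v4 y).
Definition vscal (a : R) (x : V) : V :=
  mkV (a * v0 x) (a * v1 x) (a * v2 x) (a * v3 x) (a * v4 x).

Definition lightlike (x : V) : Prop := ip x x = 0.

(* homogeneous coordinates of a point of R^2 ∪ {∞} (w.r.t. the fixed vector p) *)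
Definition is_point (p x : V) : Prop := lightlike x /\ x <> vzero /\ ip x p = 0.

Definition same_point (x y : V) : Prop := exists l : R, l <> 0 /\ x = vscal l y.

Definition Zinterval (dom : Z -> Prop) : Prop :=
  forall a b c : Z, dom a -> dom b -> (a <= c <= b)%Z -> dom c.

Definition discrete_curve (p : V) (dom : Z -> Prop) (f : Z -> V) : Prop :=
  Zinterval dom /\ forall j, dom j -> is_point p (f j).

(* curvature of the space form Q determined by q *)
Definition curv (q : V) : R := - ip q q.

(* <x,y> after normalising x, y to <x,q> = <y,q> = -1 *)
Definition qratio (q x y : V) : R := ip x y / (ip x q * ip y q).

Definition acosh (x : R) : R := ln (x + sqrt (x * x - 1)).

(* distance in the space form Q between (the points represented by) x and y:
   Euclidean  : sqrt(-2<x,y>)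
   spherical  : arccos(1 + K <x,y>) / sqrt K           (K > 0)
   hyperbolic : arccosh(1 + K <x,y>) / sqrt (-K)       (K < 0)
   with x,y normalised by <x,q> = <y,q> = -1 and K = -<q,q>. *)
Definition distQ (q x y : V) : R :=
  let K := curv q in
  let c := qratio q x y in
  if Rlt_dec 0 K then acos (1 + K * c) / sqrt K
  else if Rlt_dec K 0 then acosh (1 + K * c) / sqrt (- K)
  else sqrt (-2 * c).

Definition constant_arclength (q : V) (dom : Z -> Prop) (f : Z -> V) : Prop :=
  exists c : R, forall j, dom j -> dom (j + 1)%Z -> distQ q (f j) (f (j + 1)%Z) = c.

(* hyperbolic case: x and y lie on the same side of the boundary circle
   (given by q ± sqrt<q,q> p, i.e. <x,q> = 0); the sign of <x,q> is compared for
   lifts in the same nappe of the light cone of p^⊥ (signature (3,1)), the nappe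
   being detected by the sign of <x,t> for any timelike t ⊥ p. *)
Definition same_side (p q x y : V) : Prop :=
  forall t : V, ip t p = 0 -> ip t t < 0 ->
    0 < (ip x t * ip y t) * (ip x q * ip y q).

(* spherical case: the normalised vectors -x/<x,q>, -y/<y,q> have antipodal
   projections onto q^⊥ (the projection of n is n - q / K). *)
Definition antipodal (q x y : V) : Prop :=
  let K := curv q in
  vadd (vscal (- / ip x q) x) (vscal (- / K) q)
  = vscal (-1) (vadd (vscal (- / ip y q) y) (vscal (- / K) q)).

Definition regular (p q : V) (dom : Z -> Prop) (f : Z -> V) : Prop :=
  (forall i, dom i -> dom (i + 1)%Z -> dom (i + 2)%Z ->
     ~ same_point (f i) (f (i + 1)%Z) /\ ~ same_point (f (i + 1)%Z) (f (i + 2)%Z)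
     /\ ~ same_point (f i) (f (i + 2)%Z)) /\
  (0 < ip q q -> forall i j, dom i -> dom j -> same_side p q (f i) (f j)) /\
  (ip q q < 0 -> forall i, dom i -> dom (i + 1)%Z -> ~ antipodal q (f i) (f (i + 1)%Z)).

From Stdlib Require Import Reals ZArith Lra Lia Psatz Classical.
Open Scope R_scope.

(* A point of Q is represented by its lift x normalised by <x,q> = -1, and for two such
   lifts distQ is a strictly monotone function of <x,y>.  Hence constant arc-length says
   that the normalised product <f_i,f_j>/(<f_i,q><f_j,q>) is one constant chi on all edges
   (iii); monotonicity holds on the range chi <= 0, 1 + K chi >= -1 (K = -<q,q> > 0), which
   is forced by the signature (3,2) of the form.  Equality of this quantity on two
   consecutive edges is (ii) after clearing denominators.  A circle a_j = al f_j + be q + ga p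
   through f_(j-1) and f_(j+1) has al <> 0 and gives <f_j,f_(j+-1)>/<f_(j+-1),q> = -be/al,
   which is (iii) locally; conversely f_j - chi<f_j,q> q + <f_j,q> sqrt(-chi(2 - <q,q>chi)) p
   is such a circle. *)

Lemma ip_sym x y : ip x y = ip y x.
Proof. unfold ip; ring. Qed.

Lemma ip_vaddl x y z : ip (vadd x y) z = ip x z + ip y z.
Proof. unfold ip, vadd; simpl; ring. Qed.

Lemma ip_vaddr x y z : ip z (vadd x y) = ip z x + ip z y.
Proof. unfold ip, vadd; simpl; ring. Qed.

Lemma ip_vscall a x y : ip (vscal a x) y = a * ip x y.
Proof. unfold ip, vscal; simpl; ring. Qed.

Lemma ip_vscalr a x y : ip y (vscal a x) = a * ip y x.
Proof. unfold ip, vscal; simpl; ring. Qed.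

Lemma vscal1 x : vscal 1 x = x.
Proof. destruct x; unfold vscal; simpl; f_equal; ring. Qed.

Ltac ip_expand := rewrite ?ip_vaddl, ?ip_vaddr, ?ip_vscall, ?ip_vscalr.
Ltac ip_expand_in H := rewrite ?ip_vaddl, ?ip_vaddr, ?ip_vscall, ?ip_vscalr in H.
Ltac ip_simpl H := ip_expand_in H;
  repeat match goal with E : ip _ _ = _ |- _ => progress rewrite E in H end.

Lemma linear_system_2x3_nontrivial x1 x2 x3 y1 y2 y3 :
  exists a b c, ~ (a = 0 /\ b = 0 /\ c = 0) /\
    a * x1 + b * x2 + c * x3 = 0 /\ a * y1 + b * y2 + c * y3 = 0.
Proof.
  set (c1 := x2 * y3 - x3 * y2); set (c2 := x3 * y1 - x1 * y3);
  set (c3 := x1 * y2 - x2 * y1).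
  destruct (classic (c1 = 0 /\ c2 = 0 /\ c3 = 0)) as [[C1 [C2 C3]] | Hcross].
  2: { exists c1, c2, c3; split; [exact Hcross | unfold c1, c2, c3; split; ring]. }
  destruct (classic (x1 = 0 /\ x2 = 0)) as [[X1 X2] | Hx].
  2: { exists (- x2), x1, 0; split; [lra | unfold c3 in C3; split; nra]. }
  destruct (Req_dec y1 0) as [Y1 | Y1].
  - exists 1, 0, 0; split; [lra | split; lra].
  - assert (X3 : x3 = 0).
    { unfold c2 in C2; rewrite X1 in C2.
      apply (Rmult_eq_reg_r y1); lra. }
    exists (- y2), y1, 0; split; [lra | subst; split; ring].
Qed.

(* The signature of the form is (3,2), so it admits no negative definite 3-space. *)
Lemma ip_ge0_of_orth_timelike p t u :
  ip p p < 0 -> ip t t < 0 -> ip p t = 0 -> ip u p = 0 -> ip u t = 0 ->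
  0 <= ip u u.
Proof.
  intros Hpp Htt Hpt Hup Hut.
  destruct (Rle_lt_dec 0 (ip u u)) as [| Huu]; [assumption | exfalso].
  destruct (linear_system_2x3_nontrivial (v3 p) (v3 t) (v3 u) (v4 p) (v4 t) (v4 u))
    as [a [b [c [Hnz [E3 E4]]]]].
  set (w := vadd (vscal a p) (vadd (vscal b t) (vscal c u))).
  assert (Hgram : ip w w = a * a * ip p p + b * b * ip t t + c * c * ip u u).
  { unfold w; ip_expand.
    rewrite (ip_sym t p), (ip_sym p u), (ip_sym t u), Hpt, Hup, Hut; ring. }
  assert (Hspace : ip w w = v0 w * v0 w + v1 w * v1 w + v2 w * v2 w).
  { unfold ip; replace (v3 w) with 0 by (unfold w; simpl; lra).
    replace (v4 w) with 0 by (unfold w; simpl; lra); ring. }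
  assert (a * a * ip p p + b * b * ip t t + c * c * ip u u < 0).
  { destruct (Req_dec a 0) as [Ha | Ha]; [destruct (Req_dec b 0) as [Hb | Hb] |].
    - assert (Hc : c <> 0) by tauto; subst a b.
      assert (0 < c * c) by nra; nra.
    - assert (0 < b * b) by nra; nra.
    - assert (0 < a * a) by nra; nra. }
  assert (0 <= v0 w * v0 w + v1 w * v1 w + v2 w * v2 w) by nra.
  lra.
Qed.

(* For the points a, b of Q: the squared chordal distance -2<a,b> is nonnegative and, on a
   sphere, at most the squared diameter.  Each bound applies [ip_ge0_of_orth_timelike] to a
   vector orthogonal to p and to a timelike vector (q, or a + q when q is null); in the
   hyperbolic case a - b would be timelike and separate a from b, contradicting [same_side]. *)
Lemma normalized_ip_bounds p q a b :
  ip p p = -1 -> ip q p = 0 -> ip a a = 0 -> ip b b = 0 ->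
  ip a p = 0 -> ip b p = 0 -> ip a q = -1 -> ip b q = -1 ->
  (0 < ip q q -> forall t, ip t p = 0 -> ip t t < 0 -> 0 < ip a t * ip b t) ->
  ip a b <= 0 /\ (ip q q < 0 -> ip q q * ip a b <= 2).
Proof.
  intros Hpp Hqp Haa Hbb Hap Hbp Haq Hbq Hside.
  assert (Hba : ip b a = ip a b) by apply ip_sym.
  assert (Hpq : ip p q = 0) by (rewrite ip_sym; exact Hqp).
  assert (Hqa : ip q a = -1) by (rewrite ip_sym; exact Haq).
  assert (Hqb : ip q b = -1) by (rewrite ip_sym; exact Hbq).
  assert (Hpa : ip p a = 0) by (rewrite ip_sym; exact Hap).
  assert (Hpb : ip p b = 0) by (rewrite ip_sym; exact Hbp).
  split.
  - destruct (Rtotal_order (ip q q) 0) as [Qneg | [Q0 | Qpos]].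
    + pose proof (ip_ge0_of_orth_timelike p q (vadd b (vscal (-1) a))) as H.
      ip_simpl H; lra.
    + pose proof (ip_ge0_of_orth_timelike p (vadd a q)
        (vadd b (vadd (vscal (-1) a) (vscal (ip a b) q)))) as H.
      ip_simpl H; lra.
    + destruct (Rle_lt_dec (ip a b) 0) as [| Hab]; [assumption | exfalso].
      pose proof (Hside Qpos (vadd a (vscal (-1) b))) as H.
      ip_simpl H; nra.
  - intro Qneg.
    pose proof (ip_ge0_of_orth_timelike p q
      (vadd (vscal (ip q q) a) (vadd (vscal (ip q q) b) (vscal 2 q)))) as H.
    ip_simpl H.
    specialize (H ltac:(lra) Qneg eq_refl ltac:(lra) ltac:(lra)).
    nra.
Qed.

Lemma qratio_bounds p q x y :
  ip p p = -1 -> ip q p = 0 -> is_point p x -> is_point p y ->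
  ip x q <> 0 -> ip y q <> 0 -> (0 < ip q q -> same_side p q x y) ->
  qratio q x y <= 0 /\ (ip q q < 0 -> ip q q * qratio q x y <= 2).
Proof.
  intros Hpp Hqp [Hxx [_ Hxp]] [Hyy [_ Hyp]] Hxq Hyq Hside.
  set (a := vscal (- / ip x q) x); set (b := vscal (- / ip y q) y).
  replace (qratio q x y) with (ip a b)
    by (unfold a, b, qratio; ip_expand; field; auto).
  unfold lightlike in Hxx, Hyy.
  apply (normalized_ip_bounds p); unfold a, b; ip_expand;
    rewrite ?Hxx, ?Hyy, ?Hxp, ?Hyp; try ring; try (field; auto); try assumption.
  intros Qpos t Htp Htt.
  specialize (Hside Qpos t Htp Htt).
  ip_expand.
  replace (- / ip x q * ip x t * (- / ip y q * ip y t)) with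
    (ip x t * ip y t * (ip x q * ip y q) / ((ip x q * ip y q) * (ip x q * ip y q)))
    by (field; auto).
  apply Rdiv_lt_0_compat; [exact Hside |].
  assert (ip x q * ip y q <> 0) by (apply Rmult_integral_contrapositive_currified; assumption).
  nra.
Qed.

Definition space_form_dist (K c : R) : R :=
  if Rlt_dec 0 K then acos (1 + K * c) / sqrt K
  else if Rlt_dec K 0 then acosh (1 + K * c) / sqrt (- K)
  else sqrt (-2 * c).

Lemma distQ_space_form_dist q x y : distQ q x y = space_form_dist (curv q) (qratio q x y).
Proof. reflexivity. Qed.

Lemma acos_inj x y : -1 <= x <= 1 -> -1 <= y <= 1 -> acos x = acos y -> x = y.
Proof. intros Hx Hy E; rewrite <- (cos_acos x), <- (cos_acos y), E; auto. Qed.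

(* [y] is recovered from [g = y + sqrt (y^2 - 1)] as [(g + 1/g)/2]. *)
Lemma acosh_arg_spec y : 1 <= y ->
  0 < y + sqrt (y * y - 1) /\ y = (y + sqrt (y * y - 1) + / (y + sqrt (y * y - 1))) / 2.
Proof.
  intro Hy.
  pose proof (sqrt_pos (y * y - 1)) as Hs0.
  pose proof (sqrt_sqrt (y * y - 1) ltac:(nra)) as Hss.
  assert (Hg : 0 < y + sqrt (y * y - 1)) by lra.
  split; [exact Hg |].
  apply (Rmult_eq_reg_l (2 * (y + sqrt (y * y - 1)))); [| lra].
  field_simplify; [nra | lra].
Qed.

Lemma acosh_inj x y : 1 <= x -> 1 <= y -> acosh x = acosh y -> x = y.
Proof.
  intros Hx Hy E.
  destruct (acosh_arg_spec x Hx) as [Gx Ex]; destruct (acosh_arg_spec y Hy) as [Gy Ey].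
  apply ln_inv in E; [| exact Gx | exact Gy].
  rewrite Ex, Ey, E; reflexivity.
Qed.

Lemma space_form_dist_inj K c1 c2 :
  c1 <= 0 -> c2 <= 0 -> (0 < K -> -2 <= K * c1) -> (0 < K -> -2 <= K * c2) ->
  space_form_dist K c1 = space_form_dist K c2 -> c1 = c2.
Proof.
  intros H1 H2 B1 B2; unfold space_form_dist.
  destruct (Rlt_dec 0 K) as [Kpos | _]; [| destruct (Rlt_dec K 0) as [Kneg | Kzero]].
  - intro E; apply Rdiv_eq_reg_r in E; [| pose proof (sqrt_lt_R0 K Kpos); lra].
    specialize (B1 Kpos); specialize (B2 Kpos).
    apply acos_inj in E; [| split; nra | split; nra].
    apply (Rmult_eq_reg_l K); lra.
  - intro E; apply Rdiv_eq_reg_r in E; [| pose proof (sqrt_lt_R0 (- K)); lra].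
    apply acosh_inj in E; [| nra | nra].
    apply (Rmult_eq_reg_l K); lra.
  - intro E; apply sqrt_inj in E; lra.
Qed.

Lemma ex_const_iff_pairwise_eq {A B : Type} (P Q : A -> Prop) (g : A -> B) (b0 : B) :
  (exists c, forall x, P x -> Q x -> g x = c) <->
  (forall x y, P x -> Q x -> P y -> Q y -> g x = g y).
Proof.
  split.
  - intros [c Hc] x y Px Qx Py Qy; rewrite (Hc x Px Qx), (Hc y Py Qy); reflexivity.
  - intro Hg.
    destruct (classic (exists x, P x /\ Q x)) as [[x0 [P0 Q0]] | Hnone].
    + exists (g x0); intros x Px Qx; exact (Hg x x0 Px Qx P0 Q0).
    + exists b0; intros x Px Qx; exfalso; eauto.
Qed.

Lemma Zinterval_pairwise_iff_step {B : Type} (dom : Z -> Prop) (g : Z -> B) :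
  Zinterval dom ->
  (forall i j, dom i -> dom (i + 1)%Z -> dom j -> dom (j + 1)%Z -> g i = g j) <->
  (forall i, dom i -> dom (i + 1)%Z -> dom (i + 2)%Z -> g i = g (i + 1)%Z).
Proof.
  intro Hint; split.
  - intros Hg i Hi Hi1 Hi2; apply Hg; auto.
    replace (i + 1 + 1)%Z with (i + 2)%Z by ring; exact Hi2.
  - intros Hstep.
    assert (Hup : forall i j, (i <= j)%Z -> dom i -> dom (j + 1)%Z -> g i = g j).
    { intros i j Hij Hi; pattern j; apply Z.le_ind with (n := i); [| | | exact Hij].
      - intros k k' ->; reflexivity.
      - reflexivity.
      - intros k Hik IH Hk2.
        assert (Hk1 : dom (k + 1)%Z) by (apply (Hint i (Z.succ k + 1)%Z); auto; lia).
        assert (Hk : dom k) by (apply (Hint i (Z.succ k + 1)%Z); auto; lia).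
        rewrite (IH Hk1), (Hstep k Hk Hk1); [reflexivity |].
        replace (k + 2)%Z with (Z.succ k + 1)%Z by ring; exact Hk2. }
    intros i j Hi Hi1 Hj Hj1.
    destruct (Z.le_gt_cases i j); [apply Hup; auto | symmetry; apply Hup; auto; lia].
Qed.

Lemma ratio_common_factor_eq_iff a b x y z : x <> 0 -> y <> 0 -> z <> 0 ->
  (a / (x * y) = b / (y * z) <-> b * x - a * z = 0).
Proof.
  intros Hx Hy Hz.
  assert (Hxyz : x * y * z <> 0) by (repeat apply Rmult_integral_contrapositive_currified; assumption).
  replace (a / (x * y)) with (a * z / (x * y * z)) by (field; auto).
  replace (b / (y * z)) with (b * x / (x * y * z)) by (field; auto).
  split; intro H.
  - apply Rdiv_eq_reg_r in H; [lra | exact Hxyz].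
  - f_equal; lra.
Qed.

Lemma qratio_eq_of_circle_in_span p q x y z a al be ga :
  ip p p = -1 -> ip q p = 0 -> ip x p = 0 -> ip z p = 0 ->
  ip x q <> 0 -> ip y q <> 0 -> ip z q <> 0 ->
  a = vadd (vscal al y) (vadd (vscal be q) (vscal ga p)) ->
  lightlike a -> a <> vzero -> ip a x = 0 -> ip a z = 0 ->
  qratio q x y = qratio q y z.
Proof.
  intros Hpp Hqp Hxp Hzp Hxq Hyq Hzq -> Ha Hnz Hax Haz.
  unfold lightlike in Ha; ip_expand_in Ha; ip_expand_in Hax; ip_expand_in Haz.
  rewrite (ip_sym p x), Hxp, (ip_sym q x) in Hax.
  rewrite (ip_sym p z), Hzp, (ip_sym q z) in Haz.
  assert (Hal : al <> 0).
  { intros ->.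
    assert (be = 0) as ->.
    { assert (Hbe : be * ip x q = 0) by (rewrite <- Hax; ring).
      apply Rmult_integral in Hbe; tauto. }
    rewrite (ip_sym p q), Hqp, Hpp in Ha.
    assert (ga = 0) as -> by nra.
    apply Hnz; unfold vzero, vadd, vscal; simpl; f_equal; ring. }
  assert (Hyw : forall w, al * ip y w + be * ip w q = 0 -> ip y w = - be * ip w q / al).
  { intros w Hw; apply (Rmult_eq_reg_l al); [| exact Hal].
    replace (al * (- be * ip w q / al)) with (- be * ip w q) by (field; exact Hal); lra. }
  unfold qratio; rewrite (ip_sym x y), (Hyw x), (Hyw z); [field; auto | lra | lra].
Qed.

(* The coefficient of p makes the vector lightlike; it is real by [edge_qratio_bounds]. *)
Definition congruence_circle (p q : V) (chi : R) (x : V) : V :=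
  vadd x (vadd (vscal (- chi * ip x q) q)
                (vscal (ip x q * sqrt (- chi * (2 - ip q q * chi))) p)).

Lemma congruence_circle_lightlike p q chi x :
  ip p p = -1 -> ip q p = 0 -> is_point p x -> 0 <= - chi * (2 - ip q q * chi) ->
  lightlike (congruence_circle p q chi x).
Proof.
  intros Hpp Hqp [Hxx [_ Hxp]] Hdisc; unfold lightlike in *.
  pose proof (sqrt_sqrt _ Hdisc) as Hs.
  unfold congruence_circle; ip_expand.
  rewrite (ip_sym q x), (ip_sym p x), (ip_sym p q), Hxx, Hxp, Hqp, Hpp.
  transitivity (- (ip x q * ip x q) *
    (sqrt (- chi * (2 - ip q q * chi)) * sqrt (- chi * (2 - ip q q * chi))
     - - chi * (2 - ip q q * chi))); [ring | rewrite Hs; ring].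
Qed.

Lemma congruence_circle_neq0 p q chi x :
  ip q p = 0 -> is_point p x -> ip x q <> 0 -> congruence_circle p q chi x <> vzero.
Proof.
  intros Hqp [Hxx [_ Hxp]] Hxq Hz.
  assert (Ex : ip (congruence_circle p q chi x) x = 0) by (rewrite Hz; unfold ip; simpl; ring).
  assert (Eq : ip (congruence_circle p q chi x) q = 0) by (rewrite Hz; unfold ip; simpl; ring).
  unfold congruence_circle in Ex, Eq; ip_expand_in Ex; ip_expand_in Eq.
  unfold lightlike in Hxx.
  rewrite (ip_sym q x), (ip_sym p x), Hxx, Hxp in Ex; rewrite (ip_sym p q), Hqp in Eq.
  assert (chi = 0) as ->.
  { assert (Hsq : 0 < ip x q * ip x q) by nra. nra. }
  lra.
Qed.

Lemma congruence_circle_orth p q chi x w :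
  ip q p = 0 -> ip w p = 0 -> ip x w = chi * (ip x q * ip w q) ->
  ip (congruence_circle p q chi x) w = 0.
Proof.
  intros Hqp Hwp Hxw.
  unfold congruence_circle; ip_expand.
  rewrite Hxw, (ip_sym q w), (ip_sym p w), Hwp; ring.
Qed.

Definition edge_qratio (q : V) (f : Z -> V) (i : Z) : R := qratio q (f i) (f (i + 1)%Z).

Section PlanarCurve.

Variables (p q : V) (dom : Z -> Prop) (f : Z -> V).
Hypotheses (Hpp : ip p p = -1) (Hqp : ip q p = 0) (Hint : Zinterval dom)
  (Hpts : forall j, dom j -> is_point p (f j))
  (HfQ : forall j, dom j -> ip (f j) q <> 0)
  (Hside : 0 < ip q q -> forall i j, dom i -> dom j -> same_side p q (f i) (f j)).

Lemma edge_qratio_bounds i : dom i -> dom (i + 1)%Z ->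
  edge_qratio q f i <= 0 /\ (ip q q < 0 -> ip q q * edge_qratio q f i <= 2).
Proof.
  intros Hi Hi1; apply (qratio_bounds p); auto.
Qed.

Lemma constant_arclength_iff_qratio_const :
  constant_arclength q dom f <->
  exists chi, forall i, dom i -> dom (i + 1)%Z -> edge_qratio q f i = chi.
Proof.
  unfold constant_arclength.
  rewrite (ex_const_iff_pairwise_eq dom (fun i => dom (i + 1)%Z)
             (fun i => distQ q (f i) (f (i + 1)%Z)) 0).
  rewrite (ex_const_iff_pairwise_eq dom (fun i => dom (i + 1)%Z) (edge_qratio q f) 0).
  split; intros Heq i j Hi Hi1 Hj Hj1; specialize (Heq i j Hi Hi1 Hj Hj1).
  - destruct (edge_qratio_bounds i Hi Hi1) as [Bi Si].
    destruct (edge_qratio_bounds j Hj Hj1) as [Bj Sj].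
    apply (space_form_dist_inj (curv q)); auto;
      unfold curv; intro Kpos; [specialize (Si ltac:(lra)) | specialize (Sj ltac:(lra))]; nra.
  - rewrite !distQ_space_form_dist; f_equal; exact Heq.
Qed.

Lemma qratio_const_iff_step :
  (exists chi, forall i, dom i -> dom (i + 1)%Z -> edge_qratio q f i = chi) <->
  (forall i, dom i -> dom (i + 1)%Z -> dom (i + 2)%Z ->
     edge_qratio q f i = edge_qratio q f (i + 1)%Z).
Proof.
  rewrite (ex_const_iff_pairwise_eq dom (fun i => dom (i + 1)%Z) (edge_qratio q f) 0).
  exact (Zinterval_pairwise_iff_step dom (edge_qratio q f) Hint).
Qed.

Lemma orth_q_iff_qratio_step :
  (forall i, dom i -> dom (i + 1)%Z -> dom (i + 2)%Z ->
     ip (vadd (vscal (ip (f (i + 2)%Z) (f (i + 1)%Z)) (f i))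
              (vscal (- ip (f i) (f (i + 1)%Z)) (f (i + 2)%Z))) q = 0) <->
  (forall i, dom i -> dom (i + 1)%Z -> dom (i + 2)%Z ->
     edge_qratio q f i = edge_qratio q f (i + 1)%Z).
Proof.
  split; intros H i Hi Hi1 Hi2; specialize (H i Hi Hi1 Hi2);
    unfold edge_qratio, qratio in *; ip_expand; ip_expand_in H;
    rewrite <- Z.add_assoc in *; simpl (1 + 1)%Z in *;
    rewrite (ip_sym (f (i + 2)%Z) (f (i + 1)%Z)) in *.
  - apply ratio_common_factor_eq_iff; auto; lra.
  - apply ratio_common_factor_eq_iff in H; auto; lra.
Qed.

Lemma circle_congruence_iff_qratio_const :
  (exists a : Z -> V, forall j, dom (j - 1)%Z -> dom j -> dom (j + 1)%Z ->
     (lightlike (a j) /\ a j <> vzero /\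
      ip (a j) (f (j - 1)%Z) = 0 /\ ip (a j) (f (j + 1)%Z) = 0) /\
     (exists al be ga : R, a j = vadd (vscal al (f j)) (vadd (vscal be q) (vscal ga p)))) <->
  (exists chi, forall i, dom i -> dom (i + 1)%Z -> edge_qratio q f i = chi).
Proof.
  split.
  - intros [a Ha]; apply qratio_const_iff_step; intros i Hi Hi1 Hi2.
    assert (Hprev : (i + 1 - 1)%Z = i) by ring.
    assert (Hnext : (i + 1 + 1)%Z = (i + 2)%Z) by ring.
    destruct (Ha (i + 1)%Z) as [[La [Na [Oprev Onext]]] [al [be [ga Ea]]]];
      rewrite ?Hprev, ?Hnext in *; auto.
    destruct (Hpts i Hi) as [_ [_ Pi]]; destruct (Hpts _ Hi2) as [_ [_ Pk]].
    unfold edge_qratio; rewrite Hnext.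
    apply (qratio_eq_of_circle_in_span p q _ _ _ (a (i + 1)%Z) al be ga); auto.
  - intros [chi Hchi].
    exists (fun j => congruence_circle p q chi (f j)).
    intros j Hjm Hj Hjp.
    destruct (edge_qratio_bounds j Hj Hjp) as [B1 B2]; rewrite (Hchi j Hj Hjp) in B1, B2.
    assert (Hdisc : 0 <= - chi * (2 - ip q q * chi))
      by (destruct (Rlt_dec (ip q q) 0) as [Qneg | Qnneg]; [specialize (B2 Qneg) |]; nra).
    assert (Hedge : forall i, dom i -> dom (i + 1)%Z ->
              ip (f i) (f (i + 1)%Z) = chi * (ip (f i) q * ip (f (i + 1)%Z) q)).
    { intros i Hi Hi1; rewrite <- (Hchi i Hi Hi1); unfold edge_qratio, qratio.
      field; split; auto. }
    split; [repeat split |].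
    + apply congruence_circle_lightlike; auto.
    + apply congruence_circle_neq0; auto; apply Hpts; auto.
    + apply congruence_circle_orth; [exact Hqp | apply Hpts; auto |].
      pose proof (Hedge (j - 1)%Z Hjm) as E; rewrite Z.sub_add in E.
      rewrite ip_sym, (E Hj); ring.
    + apply congruence_circle_orth; [exact Hqp | apply Hpts; auto |]; auto.
    + exists 1, (- chi * ip (f j) q), (ip (f j) q * sqrt (- chi * (2 - ip q q * chi))).
      rewrite vscal1; reflexivity.
Qed.

End PlanarCurve.

Theorem lemma3p12 (p q : V) (dom : Z -> Prop) (f : Z -> V)
  (Hp : ip p p = -1) (Hq : q <> vzero) (Hqp : ip q p = 0)
  (Hcurve : discrete_curve p dom f) (Hreg : regular p q dom f)
  (HinQ : forall j, dom j -> ip (f j) q <> 0) :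
  let cond_i := constant_arclength q dom f in
  let cond_ii :=
    forall i, dom i -> dom (i + 1)%Z -> dom (i + 2)%Z ->
      ip (vadd (vscal (ip (f (i + 2)%Z) (f (i + 1)%Z)) (f i))
               (vscal (- ip (f i) (f (i + 1)%Z)) (f (i + 2)%Z))) q = 0 in
  let cond_iii :=
    exists chi : R, forall i, dom i -> dom (i + 1)%Z ->
      ip (f i) (f (i + 1)%Z) / (ip (f i) q * ip (f (i + 1)%Z) q) = chi in
  let cond_iv :=
    exists a : Z -> V, forall j, dom (j - 1)%Z -> dom j -> dom (j + 1)%Z ->
      (lightlike (a j) /\ a j <> vzero /\
       ip (a j) (f (j - 1)%Z) = 0 /\ ip (a j) (f (j + 1)%Z) = 0) /\
      (exists al be ga : R, a j = vadd (vscal al (f j)) (vadd (vscal be q) (vscal ga p))) in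
  (cond_i <-> cond_ii) /\ (cond_i <-> cond_iii) /\ (cond_i <-> cond_iv).
Proof.
  intros cond_i cond_ii cond_iii cond_iv.
  destruct Hcurve as [Hint Hpts]; destruct Hreg as [_ [Hside _]].
  assert (Hi_iii : cond_i <-> cond_iii)
    by exact (constant_arclength_iff_qratio_const p q dom f Hp Hqp Hpts HinQ Hside).
  assert (Hii_iii : cond_ii <-> cond_iii).
  { etransitivity; [exact (orth_q_iff_qratio_step q dom f HinQ) |].
    symmetry; exact (qratio_const_iff_step q dom f Hint). }
  assert (Hiv_iii : cond_iv <-> cond_iii)
    by exact (circle_congruence_iff_qratio_const p q dom f Hp Hqp Hint Hpts HinQ Hside).
  tauto.
Qed.
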